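(* Let $k\ge 2$, let $H_0$ be a finite $k$-uniform hypergraph, let $(H_t)_{t\ge0}$ be the ILTH hypergraphs generated from $H_0$, and for each $t$ let $G(H_t)$ denote the 2-section of $H_t$. A finite graph $G$ admits a homomorphism to $G(H_0)$ if and only if $G$ is isomorphic to an induced subgraph of $G(H_t)$ for some integer $t\ge 0$. In particular, the set of isomorphism types of finite induced subgraphs of the graphs $G(H_t)$, $t\ge0$, is exactly the set of finite graphs admitting a homomorphism to $G(H_0)$.
   Context: A $k$-uniform hypergraph has every hyperedge a $k$-element subset of the vertex set. The ILTH process: given $H_t$, form $H_{t+1}$ by adding for each vertex $x\in V(H_t)$ a new vertex $x'$ (its clone), and taking $E(H_{t+1})=E(H_t)\cup\{(e\setminus\{x\})\cup\{x'\} : e\in E(H_t),\ x\in e\}$. The 2-section of a hypergraph is the graph on the same vertices in which distinct vertices are adjacent iff they lie in a common hyperedge. A homomorphism of graphs is a map on vertices sending edges to edges. *)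

From mathcomp Require Import all_boot.
Set Implicit Arguments. Unset Strict Implicit. Unset Printing Implicit Defensive.

Definition k_uniform (V : finType) (k : nat) (E : {set {set V}}) : Prop :=
  forall e, e \in E -> #|e| = k.

(* One ILTH step: the new vertex set is V + V, where inl x is the old vertex x
   and inr x is its clone x'. *)
Definition ilth_step (V : finType) (E : {set {set V}}) : {set {set (V + V)}} :=
  [set [set (@inl V V) y | y in e] | e : {set V} in E] :|:
  [set [set (@inl V V) y | y in e :\ x] :|: [set (@inr V V x)]
     | e : {set V} in E, x : V in e].

Fixpoint ilth_V (V : finType) (t : nat) : finType :=
  match t with
  | 0 => V
  | t'.+1 => ((ilth_V V t') + (ilth_V V t'))%type
  end.

Fixpoint ilth_E (V : finType) (E : {set {set V}}) (t : nat)
  : {set {set ilth_V V t}} :=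
  match t return {set {set ilth_V V t}} with
  | 0 => E
  | t'.+1 => ilth_step (ilth_E E t')
  end.

Definition two_section (V : finType) (E : {set {set V}}) : rel V :=
  fun x y => (x != y) && [exists e in E, (x \in e) && (y \in e)].

Definition graph_hom (T U : finType) (g : rel T) (h : rel U) (f : T -> U) : Prop :=
  forall x y, g x y -> h (f x) (f y).

Definition induced_embedding (T U : finType) (g : rel T) (h : rel U) (f : T -> U)
  : Prop := injective f /\ forall x y, g x y = h (f x) (f y).

From mathcomp Require Import all_boot.
Set Implicit Arguments. Unset Strict Implicit. Unset Printing Implicit Defensive.

(* The copies of v in H_t are indexed by addresses P : nat -> bool (at step i,
   keep the vertex or take its clone).  Old vertices keep their adjacencies,
   a clone is adjacent to the neighbours of its original, and two clones are
   never adjacent; so two copies are adjacent iff their originals are and no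
   step cloned both.  Since the complement of a finite loopless graph is an
   intersection graph (index the steps by its non-edges, and give each vertex
   the non-edges through it), any homomorphism to the 2-section of H_0 lifts
   to an induced embedding into H_t.  Conversely, mapping every vertex of H_t
   to its ancestor in H_0 is a homomorphism. *)

Lemma iotaSr m n : iota m n.+1 = rcons (iota m n) (m + n).
Proof. by rewrite -addn1 iotaD cats1. Qed.

Lemma two_section_sym (W : finType) (F : {set {set W}}) : symmetric (two_section F).
Proof.
move=> x y; rewrite /two_section eq_sym; congr andb; apply: eq_existsb => e.
by rewrite [(y \in e) && _]andbC.
Qed.

Section IlthStep.
Variables (V : finType) (E : {set {set V}}).

Lemma inl_in_imset_inl (e : {set V}) x :
  (inl x \in [set (@inl V V) y | y in e]) = (x \in e).
Proof. by apply: mem_imset => ? ? []. Qed.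

Lemma inr_in_imset_inl (e : {set V}) x :
  (inr x \in [set (@inl V V) y | y in e]) = false.
Proof. by apply/imsetP => -[]. Qed.

Lemma ilth_stepP (e' : {set V + V}) :
  reflect ((exists2 e, e \in E & e' = [set (@inl V V) y | y in e]) \/
           (exists e x, [/\ e \in E, x \in e &
               e' = [set (@inl V V) y | y in e :\ x] :|: [set (@inr V V x)]]))
          (e' \in ilth_step E).
Proof.
rewrite inE; apply: (iffP orP).
  case=> [/imsetP[e he ->]|/imset2P[e x he hx ->]]; first by left; exists e.
  by right; exists e, x.
case=> [[e he ->]|[e [x [he hx ->]]]]; first by left; apply/imsetP; exists e.
by right; apply/imset2P; exists e x.
Qed.

Lemma two_section_step_ll x y :
  two_section (ilth_step E) (inl x) (inl y) = two_section E x y.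
Proof.
rewrite /two_section (inj_eq (@inl_inj _ _)); congr andb.
apply/existsP/existsP => -[e' /andP[he' /andP[hx hy]]].
  case/ilth_stepP: he' => [[e he De]|[e [z [he _ De]]]]; subst e'.
    by exists e; rewrite he -!(inl_in_imset_inl e) hx hy.
  move: hx hy; rewrite !in_setU !in_set1 !inl_in_imset_inl !orbF !in_setD1.
  by case/andP=> _ hx /andP[_ hy]; exists e; rewrite he hx hy.
exists [set (@inl V V) z | z in e']; rewrite !inl_in_imset_inl hx hy !andbT.
by apply/ilth_stepP; left; exists e'.
Qed.

Lemma two_section_step_lr x y :
  two_section (ilth_step E) (inl x) (inr y) = two_section E x y.
Proof.
rewrite /two_section /=; apply/existsP/andP.
  move=> -[e' /andP[/ilth_stepP he' /andP[hx hy]]].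
  case: he' => [[e he De]|[e [z [he hz De]]]]; subst e'.
    by rewrite inr_in_imset_inl in hy.
  move: hx hy; rewrite !in_setU !in_set1 inl_in_imset_inl inr_in_imset_inl /= orbF.
  rewrite in_setD1 => /andP[xz hx] /eqP[->]; split=> //.
  by apply/existsP; exists e; rewrite he hx hz.
case=> xy /existsP[e /andP[he /andP[hx hy]]].
exists ([set (@inl V V) z | z in e :\ y] :|: [set (@inr V V y)]).
apply/andP; split; first by apply/ilth_stepP; right; exists e, y.
by rewrite !in_setU !in_set1 inl_in_imset_inl in_setD1 xy hx eqxx orbT.
Qed.

Lemma two_section_step_rl x y :
  two_section (ilth_step E) (inr x) (inl y) = two_section E x y.
Proof. by rewrite two_section_sym two_section_step_lr two_section_sym. Qed.

Lemma two_section_step_rr x y : two_section (ilth_step E) (inr x) (inr y) = false.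
Proof.
apply/negbTE/andP => -[xy /existsP[e' /andP[/ilth_stepP he' /andP[hx hy]]]].
case: he' => [[e _ De]|[e [z [_ _ De]]]]; subst e'.
  by rewrite inr_in_imset_inl in hx.
move: hx hy xy; rewrite !in_setU !in_set1 !inr_in_imset_inl /=.
by move=> /eqP[->] /eqP[->]; rewrite eqxx.
Qed.

End IlthStep.

Fixpoint ilth_ancestor (V : finType) (t : nat) : ilth_V V t -> V :=
  match t return ilth_V V t -> V with
  | 0 => id
  | t'.+1 => fun x => match x with inl y | inr y => ilth_ancestor y end
  end.

Lemma ilth_ancestor_hom (V : finType) (E : {set {set V}}) t :
  graph_hom (two_section (ilth_E E t)) (two_section E) (@ilth_ancestor V t).
Proof.
elim: t => [|t IH] //= [a|a] [b|b];
  rewrite ?two_section_step_ll ?two_section_step_lr ?two_section_step_rl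
          ?two_section_step_rr //; exact: IH.
Qed.

Fixpoint ilth_copy (V : finType) (t : nat) (v : V) (P : nat -> bool) : ilth_V V t :=
  match t return ilth_V V t with
  | 0 => v
  | t'.+1 => if P t' then inr (ilth_copy t' v P) else inl (ilth_copy t' v P)
  end.

Lemma ilth_copy_inj (V : finType) t (v u : V) P Q :
  ilth_copy t v P = ilth_copy t u Q -> {in iota 0 t, P =1 Q}.
Proof.
elim: t => [|t IH] //; rewrite iotaSr => /= eq_copy i.
rewrite mem_rcons inE add0n => /orP[/eqP->|i_lt].
  by case: (P t) (Q t) eq_copy => -[].
by apply: IH => //; case: (P t) (Q t) eq_copy => -[] // -[].
Qed.

Lemma two_section_ilth_copy (V : finType) (E : {set {set V}}) t v u P Q :
  two_section (ilth_E E t) (ilth_copy t v P) (ilth_copy t u Q) =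
  two_section E v u && ~~ has (fun i => P i && Q i) (iota 0 t).
Proof.
elim: t => [|t IH]; first by rewrite andbT.
rewrite iotaSr has_rcons negb_or /=.
case: (P t); case: (Q t) => /=; rewrite ?two_section_step_ll
  ?two_section_step_lr ?two_section_step_rl ?two_section_step_rr ?IH ?andbF //.
Qed.

Lemma nonedge_intersection_code (T : finType) (g : rel T) :
  symmetric g -> irreflexive g ->
  exists t (P : T -> nat -> bool),
    (forall a b, has (fun i => P a i && P b i) (iota 0 t) = ~~ g a b) /\
    (forall a b, {in iota 0 t, P a =1 P b} -> a = b).
Proof.
move=> gsym girr.
pose P a (i : nat) := [exists p : T * T,
  [&& i == enum_rank p, ~~ g p.1 p.2 & a \in [:: p.1; p.2]]].
have P_rank a p : P a (enum_rank p) = ~~ g p.1 p.2 && (a \in [:: p.1; p.2]).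
  apply/existsP/andP => [[q /and3P[/eqP/ord_inj/enum_rank_inj <- ? ?]] //|[? ?]].
  by exists p; apply/and3P.
have in_range (p : T * T) : (enum_rank p : nat) \in iota 0 #|{: T * T}|.
  by rewrite mem_iota add0n ltn_ord.
exists #|{: T * T}|, P; split=> [a b|a b eqP_ab].
  apply/hasP/idP => [[i _ /andP[/existsP[p /and3P[/eqP-> ngp ap]]]]|nab].
    rewrite P_rank => /andP[_]; move: ap ngp; rewrite !inE.
    by case/orP=> /eqP-> ngp /orP[] /eqP->; rewrite ?girr // gsym.
  exists (nat_of_ord (enum_rank (a, b))); first exact: in_range.
  by rewrite !P_rank /= nab !inE !eqxx orbT.
have := eqP_ab _ (in_range (a, a)).
by rewrite !P_rank !inE girr eqxx /= orbb => /esym/eqP.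
Qed.

Theorem theorem3p1 (k : nat) (V : finType) (E : {set {set V}})
  (hk : 2 <= k) (hE : k_uniform k E)
  (T : finType) (g : rel T) (gsym : symmetric g) (girr : irreflexive g) :
  (exists f : T -> V, graph_hom g (two_section E) f) <->
  (exists t : nat, exists f : T -> ilth_V V t,
      induced_embedding g (two_section (ilth_E E t)) f).
Proof.
split=> [[f f_hom]|[t [f [_ f_ind]]]]; last first.
  exists (fun a => ilth_ancestor (f a)) => a b gab.
  by apply: ilth_ancestor_hom; rewrite -f_ind.
have [t [P [P_nonedge P_inj]]] := nonedge_intersection_code gsym girr.
exists t, (fun a => ilth_copy t (f a) (P a)); split=> [a b /ilth_copy_inj|a b].
  exact: P_inj.
rewrite two_section_ilth_copy P_nonedge negbK.
by case gab: (g a b); rewrite ?andbF ?f_hom.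
Qed.
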